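(* The following are equivalent for an integral domain $D$: (1) $D$ is a $\ast$-SH domain; (2) $D$ is of finite $\ast$-character and for every pair $P,Q$ of distinct maximal $\ast$-ideals of $D$, $P\cap Q$ contains no nonzero prime ideal.
   Context: $\ast$ is a star operation on $D$ of finite character. A $\ast$-ideal is a nonzero fractional ideal $I$ with $I^\ast=I$; it is of finite type if $I=J^\ast$ for some nonzero finitely generated $J$. A maximal $\ast$-ideal is an integral $\ast$-ideal maximal among proper integral $\ast$-ideals. $D$ is of finite $\ast$-character if every nonzero nonunit of $D$ lies in at most finitely many maximal $\ast$-ideals. A $\ast$-homog ideal is an integral $\ast$-ideal $I$ of finite type with $I\subsetneq D$ such that $(J+L)^{\ast}\neq D$ for every pair $J,L$ of proper integral $\ast$-ideals of finite type containing $I$. $D$ is a $\ast$-SH domain if for every nonzero nonunit $x\in D$, $xD=(I_1\cdots I_n)^\ast$ for some finitely many $\ast$-homog ideals $I_1,\dots,I_n$. *)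

From Stdlib Require List.
From HB Require Import structures.
From mathcomp Require Import all_boot all_order all_algebra.
Set Implicit Arguments. Unset Strict Implicit. Unset Printing Implicit Defensive.
Import Order.TTheory GRing.Theory Num.Theory.
Local Open Scope ring_scope.

Section StarDefs.
Variable D : idomainType.
Notation K := {fraction D}.
Definition emb (d : D) : K := @FracField.tofrac D d.

Definition kset := K -> Prop.
Definition subk (I J : kset) : Prop := forall x, I x -> J x.

Definition Dset : kset := fun x => exists d : D, x = emb d.

Definition submodule (I : kset) : Prop :=
  I 0 /\ (forall x y, I x -> I y -> I (x + y)) /\
  (forall (d : D) x, I x -> I (emb d * x)).

Definition fractional (I : kset) : Prop :=
  submodule I /\ (exists x, x != 0 /\ I x) /\
  (exists d : D, d != 0 /\ forall x, I x -> Dset (emb d * x)).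

Definition integral (I : kset) : Prop := fractional I /\ subk I Dset.

Definition principal (x : K) : kset := fun y => exists d : D, y = x * emb d.

Definition smul (x : K) (I : kset) : kset := fun y => exists z, I z /\ y = x * z.

Definition isum (I J : kset) : kset :=
  fun y => exists a b, I a /\ J b /\ y = a + b.

Definition imul (I J : kset) : kset :=
  fun y => exists (n : nat) (a b : 'I_n -> K),
    (forall i, I (a i)) /\ (forall i, J (b i)) /\ y = \sum_(i < n) a i * b i.

Definition iprod (l : list kset) : kset := foldr imul Dset l.

Definition fin_gen (I : kset) : Prop :=
  exists s : seq K, I = fun y => exists c : 'I_(size s) -> D,
    y = \sum_(i < size s) emb (c i) * s`_i.

Definition star_operation (star : kset -> kset) : Prop :=
  (forall I, fractional I -> fractional (star I)) /\
  (forall x, x != 0 -> star (principal x) = principal x) /\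
  (forall x I, x != 0 -> fractional I -> star (smul x I) = smul x (star I)) /\
  (forall I, fractional I -> subk I (star I)) /\
  (forall I J, fractional I -> fractional J -> subk I J -> subk (star I) (star J)) /\
  (forall I, fractional I -> star (star I) = star I).

Definition finite_character (star : kset -> kset) : Prop :=
  forall I, fractional I ->
    star I = fun y => exists J, fractional J /\ fin_gen J /\ subk J I /\ star J y.

Definition star_ideal (star : kset -> kset) (I : kset) : Prop :=
  fractional I /\ star I = I.

Definition finite_type (star : kset -> kset) (I : kset) : Prop :=
  star_ideal star I /\ exists J, fractional J /\ fin_gen J /\ I = star J.

Definition int_star_ideal (star : kset -> kset) (I : kset) : Prop :=
  star_ideal star I /\ subk I Dset.

Definition proper (I : kset) : Prop := I <> Dset.

Definition max_star_ideal (star : kset -> kset) (P : kset) : Prop :=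
  int_star_ideal star P /\ proper P /\
  forall J, int_star_ideal star J -> proper J -> subk P J -> J = P.

Definition finite_star_character (star : kset -> kset) : Prop :=
  forall x : D, x != 0 -> x \isn't a GRing.unit ->
    exists l : list kset, forall P, max_star_ideal star P -> P (emb x) -> List.In P l.

Definition star_homog (star : kset -> kset) (I : kset) : Prop :=
  int_star_ideal star I /\ finite_type star I /\ proper I /\
  forall J L, int_star_ideal star J -> finite_type star J -> proper J -> subk I J ->
              int_star_ideal star L -> finite_type star L -> proper L -> subk I L ->
              star (isum J L) <> Dset.

Definition star_SH (star : kset -> kset) : Prop :=
  forall x : D, x != 0 -> x \isn't a GRing.unit ->
    exists l : list kset, (forall I, List.In I l -> star_homog star I) /\
      principal (emb x) = star (iprod l).

Definition nz_prime (P : kset) : Prop :=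
  integral P /\ proper P /\
  forall a b : D, P (emb (a * b)) -> P (emb a) \/ P (emb b).

End StarDefs.

(* A star-homogeneous ideal [I] lies in exactly one maximal star-ideal.  Were [I]
   contained in [P <> Q], pick [p] in [P] outside [Q]: by finite character [1] lies
   in [F^*] for some finitely generated [F] inside [Q + pD], and adjoining the
   generators of [F] to those of [I] gives finite-type star-ideals [J] in [P] and
   [L] in [Q] above [I] with [(J + L)^* = D].
   (1) -> (2): if [xD = (I_1 ... I_n)^*], every prime containing [x] contains some
   [I_k]; so a maximal star-ideal containing [x] is the unique one above some [I_k],
   and a nonzero prime inside [P] and [Q] would put some [I_k] below both.
   (2) -> (1): let [M_1, ..., M_n] be the maximal star-ideals containing [x].  There
   are [c_i] in [M_i], outside every other [M_j], with [x] dividing [c_1 ... c_n]: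
   otherwise a prime containing [x] and disjoint from the multiplicative set of such
   products would, by prime avoidance, lie in two distinct [M_j].  Then [M_i] is the
   only maximal star-ideal containing [A_i = (x, c_i)^*], so [A_i] is
   star-homogeneous, and [x^-1 (x, c_1) ... (x, c_n)] lies in no maximal
   star-ideal, whence [(A_1 ... A_n)^* = xD]. *)

From Pilot Require Import Defs.
From mathcomp Require Import all_boot all_algebra.
From Stdlib Require Import FunctionalExtensionality PropExtensionality Classical.
From Stdlib Require List.
From mathcomp Require classical_sets.
From mathcomp Require Import ring.
Set Implicit Arguments. Unset Strict Implicit. Unset Printing Implicit Defensive.
Import GRing.Theory.
Local Open Scope ring_scope.

Lemma pred_ext (T : Type) (A B : T -> Prop) : (forall x, A x <-> B x) -> A = B.
Proof.
by move=> AB; apply: functional_extensionality => x; apply: propositional_extensionality.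
Qed.

Lemma not_subset (T : Type) (A B : T -> Prop) :
  ~ (forall x, A x -> B x) -> exists x, A x /\ ~ B x.
Proof.
move=> nAB; apply: NNPP => nex; apply: nAB => x Ax.
by apply: NNPP => Bx; apply: nex; exists x.
Qed.

Definition chain (T : Type) (C : (T -> Prop) -> Prop) :=
  forall A B, C A -> C B -> (forall x, A x -> B x) \/ (forall x, B x -> A x).

Definition chain_union (T : Type) (C : (T -> Prop) -> Prop) : T -> Prop :=
  fun y => exists A, C A /\ A y.

(* [classical_sets.Zorn_bigcup] also covers the empty chain, whose union need
   not satisfy [F]; we apply it to [F] with the empty set adjoined. *)
Lemma Zorn_chain_union (T : Type) (F : (T -> Prop) -> Prop) (A0 : T -> Prop) :
  F A0 ->
  (forall C, (forall A, C A -> F A) -> (exists A, C A) -> chain C -> F (chain_union C)) ->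
  exists M, F M /\ forall B, F B -> (forall x, M x -> B x) -> B = M.
Proof.
move=> FA0 Fch.
pose F' := fun A : T -> Prop => F A \/ A = (fun _ => False).
have [A [F'A Amax]] : exists A, F' A /\ forall B, classical_sets.proper A B -> ~ F' B.
  apply: classical_sets.Zorn_bigcup => G GF' Gtot.
  case: (classic (exists A, G A /\ F A)) => [[A1 [GA1 FA1]]|nF].
  - left.
    have -> : classical_sets.bigcup G id = chain_union (fun A => G A /\ F A).
      apply: pred_ext => y; split; last by case=> X [[GX _] Xy]; exists X.
      case=> X GX Xy; exists X; do 2?split => //.
      by case: (GF' X GX) => // X0; rewrite X0 in Xy.
    apply: Fch; [by move=> A [] | by exists A1 |].
    by move=> X Y [GX _] [GY _]; exact: Gtot.
  - right; apply: pred_ext => y; split => // -[X GX Xy].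
    case: (GF' X GX) => [FX|X0]; first by apply: nF; exists X.
    by rewrite X0 in Xy.
have F'max B : F' B -> (forall x, A x -> B x) -> B = A.
  move=> F'B AB; apply: NNPP => BA; apply: (Amax B) => //; split => // BsA.
  by apply: BA; apply: pred_ext => x; split; [apply: BsA | apply: AB].
have FA : F A.
  case: F'A => // A0e; rewrite -(F'max A0) ?A0e //; by left.
by exists A; split => // B FB; apply: F'max; left.
Qed.

Lemma finite_enum (T : Type) (P : T -> Prop) (l : list T) :
  (forall t, P t -> List.In t l) ->
  exists n (f : 'I_n -> T), injective f /\ forall t, P t <-> exists i, f i = t.
Proof.
elim: l P => [|a l IH] P Pl.
  have f0 : 'I_0 -> T by case.
  by exists 0%N, f0; split=> [i|t]; [case: i | split=> [/Pl|[[]]]].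
have Pl' t : P t /\ t <> a -> List.In t l by case=> /Pl[->|].
have [n [f [f_inj Pf]]] := IH _ Pl'.
case: (classic (P a)) => Pa; last first.
  exists n, f; split => // t; rewrite -Pf; split => [Pt|[//]].
  by split => // ta; apply: Pa; rewrite -ta.
pose g i := if unlift ord0 i is Some j then f j else a.
exists n.+1, g; split.
  move=> i1 i2; rewrite /g.
  case: (unliftP ord0 i1) => [j1 ->|->]; case: (unliftP ord0 i2) => [j2 ->|->] //.
  - by move/f_inj => ->.
  - by move=> fa; have [_ /(_ fa)] := (Pf (f j1)).2 (ex_intro _ j1 erefl).
  - by move=> af; have [_ /(_ (esym af))] := (Pf (f j2)).2 (ex_intro _ j2 erefl).
move=> t; split => [Pt|[i <-]].
  case: (classic (t = a)) => [->|ta]; first by exists ord0; rewrite /g unlift_none.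
  by have [j fj] := (Pf t).1 (conj Pt ta); exists (lift ord0 j); rewrite /g liftK.
case: (unliftP ord0 i) => [j ->|->]; rewrite /g ?liftK ?unlift_none //.
by case: ((Pf (f j)).2 (ex_intro _ j erefl)).
Qed.

Lemma prod_split_at (R : comRingType) n (k : 'I_n) (a : R) (g : 'I_n -> R) :
  \prod_(i < n) (if i == k then a else g i) = a * \prod_(i < n | i != k) g i.
Proof. by rewrite (bigD1 k) //= eqxx; congr (_ * _); apply: eq_bigr => i /negbTE ->. Qed.

(** * Ideals of [D] inside its quotient field *)

Section StarSH.
Variable D : idomainType.
Local Notation K := {fraction D}.
Local Notation kset := (kset D).
Local Notation Dset := (@Dset D).

Lemma embD (a b : D) : emb (a + b) = emb a + emb b. Proof. exact: tofracD. Qed.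
Lemma embM (a b : D) : emb (a * b) = emb a * emb b. Proof. exact: tofracM. Qed.
Lemma embN (a : D) : emb (- a) = - emb a. Proof. exact: tofracN. Qed.
Lemma emb0 : emb 0 = 0 :> K. Proof. exact: tofrac0. Qed.
Lemma emb1 : emb 1 = 1 :> K. Proof. exact: tofrac1. Qed.
Lemma emb_inj : injective (@emb D). Proof. by move=> a b /eqP; rewrite /emb tofrac_eq => /eqP. Qed.
Lemma emb_neq0 (a : D) : a != 0 -> emb a != 0. Proof. by rewrite /emb tofrac_eq0. Qed.

Lemma subk_antisym (A B : kset) : subk A B -> subk B A -> A = B.
Proof. by move=> AB BA; apply: pred_ext => x; split; [apply: AB | apply: BA]. Qed.

Lemma Dset_emb (d : D) : Dset (emb d). Proof. by exists d. Qed.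
Lemma DsetD x y : Dset x -> Dset y -> Dset (x + y).
Proof. by move=> [a ->] [b ->]; exists (a + b); rewrite embD. Qed.
Lemma DsetM x y : Dset x -> Dset y -> Dset (x * y).
Proof. by move=> [a ->] [b ->]; exists (a * b); rewrite embM. Qed.
Lemma Dset1 : Dset 1. Proof. by exists 1; rewrite emb1. Qed.

Lemma Dset_principal1 : Dset = principal 1.
Proof. by apply: pred_ext => y; split; case=> d ->; exists d; rewrite ?mul1r. Qed.

Section Submodule.
Variable I : kset.
Hypothesis sI : submodule I.
Lemma submod0 : I 0. Proof. by case: sI. Qed.
Lemma submodD x y : I x -> I y -> I (x + y). Proof. by case: sI => _ [sD _]; apply: sD. Qed.
Lemma submodZ d x : I x -> I (emb d * x). Proof. by case: sI => _ [_ sZ]; apply: sZ. Qed.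
Lemma submodB x y : I x -> I y -> I (x - y).
Proof. by move=> Ix Iy; apply: submodD => //; rewrite -mulN1r -emb1 -embN; apply: submodZ. Qed.
Lemma submod_sum (T : Type) (r : seq T) (f : T -> K) :
  (forall i, I (f i)) -> I (\sum_(i <- r) f i).
Proof. by move=> If; apply: (big_ind I) => //; [apply: submod0 | apply: submodD]. Qed.
End Submodule.

(* An ideal of [D], viewed inside [K]; unlike [integral], it may be zero. *)
Definition ideal (I : kset) := submodule I /\ subk I Dset.

Lemma ideal_mulr (I : kset) y z : ideal I -> I y -> Dset z -> I (y * z).
Proof. by move=> [sI _] Iy [d ->]; rewrite mulrC; apply: submodZ. Qed.
Lemma ideal_emb_mulr (I : kset) (a b : D) : ideal I -> I (emb a) -> I (emb (a * b)).
Proof. by move=> iI Ia; rewrite embM; apply: ideal_mulr => //; apply: Dset_emb. Qed.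
Lemma ideal_emb_mull (I : kset) (a b : D) : ideal I -> I (emb b) -> I (emb (a * b)).
Proof. by rewrite mulrC; apply: ideal_emb_mulr. Qed.

Lemma ideal_eq_Dset (I : kset) : ideal I -> I 1 -> I = Dset.
Proof.
move=> [sI ID] I1; apply: pred_ext => y; split=> [/ID|[d ->]] //.
by rewrite -[emb d]mulr1; apply: submodZ.
Qed.

Lemma ideal_notin_neq0 (I : kset) (a : D) : ideal I -> ~ I (emb a) -> a != 0.
Proof. by move=> iI Ia; apply: contra_notN Ia => /eqP ->; rewrite emb0; apply: submod0 iI.1. Qed.

Lemma ideal_properP (I : kset) : ideal I -> Defs.proper I <-> ~ I 1.
Proof.
move=> iI; split=> [pI I1|nI1 ID]; first by apply/pI/ideal_eq_Dset.
by apply: nI1; rewrite ID; apply: Dset1.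
Qed.

Lemma Dset_submod : submodule Dset.
Proof.
split; first by exists 0; rewrite emb0. split; first exact: DsetD.
by move=> d x; apply: DsetM; apply: Dset_emb.
Qed.

Lemma Dset_fractional : fractional Dset.
Proof.
split; first exact: Dset_submod. split; first by exists 1; split; [apply: oner_neq0 | apply: Dset1].
by exists 1; split; [apply: oner_neq0 | move=> x Dx; rewrite emb1 mul1r].
Qed.

Lemma ideal_integral (I : kset) : ideal I -> (exists x, x != 0 /\ I x) -> integral I.
Proof.
move=> [sI ID] nz; do 3?split => //.
by exists 1; split; [apply: oner_neq0 | move=> x Ix; rewrite emb1 mul1r; apply: ID].
Qed.
Lemma integral_ideal (I : kset) : integral I -> ideal I.
Proof. by move=> [[sI _] ID]. Qed.

Lemma smul_fractional (x : K) (I : kset) :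
  x != 0 -> (exists m : D, m != 0 /\ Dset (emb m * x)) -> fractional I ->
  fractional (smul x I).
Proof.
move=> x0 [m [m0 Dm]] [sI [[y [y0 Iy]] [d [d0 ID]]]].
split; [split; [|split] | split].
- by exists 0; split; [apply: submod0 | rewrite mulr0].
- move=> _ _ [z1 [I1 ->]] [z2 [I2 ->]].
  by exists (z1 + z2); split; [apply: submodD | rewrite mulrDr].
- by move=> e _ [z [Iz ->]]; exists (emb e * z); split; [apply: submodZ | rewrite mulrCA].
- by exists (x * y); split; [rewrite mulf_neq0 | exists y].
- exists (m * d); split; first by rewrite mulf_neq0.
  by move=> _ [z [Iz ->]]; rewrite embM mulrACA; apply: DsetM => //; apply: ID.
Qed.

Lemma principal_smul (x : K) : principal x = smul x Dset.
Proof.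
apply: pred_ext => y; split; first by case=> d ->; exists (emb d); split => //; exists d.
by case=> z [[d ->] ->]; exists d.
Qed.

Lemma principal_fractional (b : D) : b != 0 -> fractional (principal (emb b)).
Proof.
move=> b0; rewrite principal_smul; apply: smul_fractional; first exact: emb_neq0.
  by exists 1; split; [apply: oner_neq0 | rewrite emb1 mul1r; apply: Dset_emb].
exact: Dset_fractional.
Qed.

Lemma principal_ideal (b : D) : ideal (principal (emb b)).
Proof.
split; last by move=> _ [d ->]; rewrite -embM; apply: Dset_emb.
split; first by exists 0; rewrite emb0 mulr0. split.
  by move=> _ _ [d1 ->] [d2 ->]; exists (d1 + d2); rewrite embD mulrDr.
by move=> e _ [d ->]; exists (e * d); rewrite embM mulrCA.
Qed.

Lemma principal_sub (I : kset) (b : D) : ideal I -> I (emb b) -> subk (principal (emb b)) I.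
Proof. by move=> iI Ib _ [d ->]; apply: ideal_mulr => //; apply: Dset_emb. Qed.

Lemma principal_mem (b : D) : principal (emb b) (emb b).
Proof. by exists 1; rewrite emb1 mulr1. Qed.

Lemma principal_proper (b : D) : b \isn't a GRing.unit -> Defs.proper (principal (emb b)).
Proof.
move=> bnu e; move/negP: bnu; apply; apply/unitrPr.
have : principal (emb b) 1 by rewrite e; apply: Dset1.
by case=> d ed; exists d; apply: emb_inj; rewrite embM emb1.
Qed.

Lemma isum_submod (I J : kset) : submodule I -> submodule J -> submodule (isum I J).
Proof.
move=> sI sJ; split; [|split].
- by exists 0, 0; do 2?split; rewrite ?addr0 //; apply: submod0.
- move=> _ _ [a [b [Ia [Jb ->]]]] [a' [b' [Ia' [Jb' ->]]]].
  by exists (a + a'), (b + b'); split; [|split; [|by rewrite addrACA]]; apply: submodD.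
- move=> d _ [a [b [Ia [Jb ->]]]]; exists (emb d * a), (emb d * b).
  by do 2?split; rewrite ?mulrDr //; apply: submodZ.
Qed.

Lemma isuml (I J : kset) x : submodule J -> I x -> isum I J x.
Proof. by move=> sJ Ix; exists x, 0; do 2?split; rewrite ?addr0 //; apply: submod0. Qed.
Lemma isumr (I J : kset) x : submodule I -> J x -> isum I J x.
Proof. by move=> sI Jx; exists 0, x; do 2?split; rewrite ?add0r //; apply: submod0. Qed.

Lemma isum_fractional (I J : kset) : fractional I -> fractional J -> fractional (isum I J).
Proof.
move=> [sI [[y [y0 Iy]] [d [d0 ID]]]] [sJ [_ [e [e0 JD]]]].
split; first exact: isum_submod. split; first by exists y; split => //; apply: isuml.
exists (d * e); split; first by rewrite mulf_neq0.
move=> _ [a [b [Ia [Jb ->]]]]; rewrite mulrDr embM; apply: DsetD.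
  by rewrite mulrAC; apply: DsetM; [apply: ID | apply: Dset_emb].
by rewrite -mulrA; apply: DsetM; [apply: Dset_emb | apply: JD].
Qed.

Lemma isum_ideal (I J : kset) : ideal I -> ideal J -> ideal (isum I J).
Proof.
move=> [sI ID] [sJ JD]; split; first exact: isum_submod.
by move=> _ [a [b [Ia [Jb ->]]]]; apply: DsetD; [apply: ID | apply: JD].
Qed.

Lemma imul_min (A B C : kset) : submodule C -> (forall a b, A a -> B b -> C (a * b)) ->
  subk (imul A B) C.
Proof. by move=> sC ABC _ [n [a [b [Aa [Bb ->]]]]]; apply: submod_sum => // i; apply: ABC. Qed.

Lemma imul_mem (A B : kset) a b : A a -> B b -> imul A B (a * b).
Proof. by move=> Aa Bb; exists 1%N, (fun _ => a), (fun _ => b); rewrite big_ord1. Qed.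

Lemma imul_submod (A B : kset) : submodule A -> submodule (imul A B).
Proof.
move=> sA; split; [|split].
- exists 0%N, (fun _ => 0), (fun _ => 0); rewrite big_ord0.
  by split; [|split] => //; case=> m; rewrite ltn0.
- move=> _ _ [n1 [a1 [b1 [Aa1 [Bb1 ->]]]]] [n2 [a2 [b2 [Aa2 [Bb2 ->]]]]].
  pose glue (u : 'I_n1 -> K) (v : 'I_n2 -> K) i :=
    match split i with inl j => u j | inr k => v k end.
  exists (n1 + n2)%N, (glue a1 a2), (glue b1 b2); rewrite /glue.
  do 2?split=> [i|]; try by case: (split i).
  rewrite big_split_ord /=; congr (_ + _); apply: eq_bigr => i _.
    by rewrite (unsplitK (inl _ i)).
  by rewrite (unsplitK (inr _ i)).
- move=> d _ [n [a [b [Aa [Bb ->]]]]]; exists n, (fun i => emb d * a i), b.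
  split; first by move=> i; apply: submodZ.
  by split => //; rewrite mulr_sumr; apply: eq_bigr => i _; rewrite mulrA.
Qed.

Lemma imulC (A B : kset) : imul A B = imul B A.
Proof.
by apply: pred_ext => y; split; case=> n [a [b [Aa [Bb ->]]]]; exists n, b, a;
  do 2?split => //; apply: eq_bigr => i _; rewrite mulrC.
Qed.

Lemma imul_fractional (A B : kset) : fractional A -> fractional B -> fractional (imul A B).
Proof.
move=> [sA [[y [y0 Ay]] [d [d0 AD]]]] [sB [[z [z0 Bz]] [e [e0 BD]]]].
split; first exact: imul_submod.
split; first by exists (y * z); split; [rewrite mulf_neq0 | apply: imul_mem].
exists (d * e); split; first by rewrite mulf_neq0.
move=> _ [n [a [b [Aa [Bb ->]]]]]; rewrite mulr_sumr; apply: submod_sum; first exact: Dset_submod.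
by move=> i; rewrite embM mulrACA; apply: DsetM; [apply: AD | apply: BD].
Qed.

Lemma imul_Dset (A B : kset) : subk A Dset -> subk B Dset -> subk (imul A B) Dset.
Proof.
move=> AD BD; apply: imul_min; first exact: Dset_submod.
by move=> a b Aa Bb; apply: DsetM; [apply: AD | apply: BD].
Qed.

Lemma imul_mono (A B A' B' : kset) : subk A A' -> subk B B' -> subk (imul A B) (imul A' B').
Proof.
move=> AA' BB' _ [n [a [b [Aa [Bb ->]]]]]; exists n, a, b.
by split; [move=> i; apply: AA' | split => // i; apply: BB'].
Qed.

Lemma iprod_fractional (l : list kset) :
  (forall I, List.In I l -> fractional I) -> fractional (iprod l).
Proof.
elim: l => [|I l IH] lf /=; first exact: Dset_fractional.
by apply: imul_fractional; [apply: lf; left | apply: IH => J lJ; apply: lf; right].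
Qed.

Lemma iprod_Dset (l : list kset) : (forall I, List.In I l -> subk I Dset) -> subk (iprod l) Dset.
Proof.
elim: l => [|I l IH] lD //=.
by apply: imul_Dset; [apply: lD; left | apply: IH => J lJ; apply: lD; right].
Qed.

Definition dspan (s : seq K) : kset := fun y => exists c : 'I_(size s) -> D,
  y = \sum_(i < size s) emb (c i) * s`_i.

Lemma dspan_nil y : dspan [::] y <-> y = 0.
Proof. by split=> [[c ->]|->]; [|exists (fun _ => 0)]; rewrite big_ord0. Qed.

Lemma dspan_cons a s y : dspan (a :: s) y <-> exists d z, dspan s z /\ y = emb d * a + z.
Proof.
split=> [[c ->]|[d [z [[c' ->] ->]]]].
  rewrite big_ord_recl /=; exists (c ord0), (\sum_(i < size s) emb (c (lift ord0 i)) * s`_i).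
  by split => //; exists (fun i => c (lift ord0 i)).
exists (fun i : 'I_(size s).+1 => if unlift ord0 i is Some j then c' j else d).
by rewrite big_ord_recl /= unlift_none; congr (_ + _); apply: eq_bigr => i _; rewrite liftK.
Qed.

Lemma dspan_submod s : submodule (dspan s).
Proof.
split; [|split].
- exists (fun _ => 0); rewrite big1 // => i _; by rewrite emb0 mul0r.
- move=> _ _ [c1 ->] [c2 ->]; exists (fun i => c1 i + c2 i); rewrite -big_split /=.
  by apply: eq_bigr => i _; rewrite embD mulrDl.
- move=> d _ [c ->]; exists (fun i => d * c i); rewrite mulr_sumr.
  by apply: eq_bigr => i _; rewrite embM mulrA.
Qed.

Lemma dspan_mem s y : List.In y s -> dspan s y.
Proof.
elim: s => [|a s IH] //= [->|sy]; apply/dspan_cons.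
  by exists 1, 0; split; [apply: submod0 (dspan_submod s) | rewrite emb1 mul1r addr0].
by exists 0, y; split; [exact: IH | rewrite emb0 mul0r add0r].
Qed.

Lemma dspan_min s (C : kset) : submodule C -> (forall y, List.In y s -> C y) -> subk (dspan s) C.
Proof.
move=> sC; elim: s => [|a s IH] sCs y; first by move/dspan_nil => ->; apply: submod0.
case/dspan_cons => d [z [sz ->]]; apply: submodD => //.
  by apply: submodZ => //; apply: sCs; left.
by apply: IH => // w sw; apply: sCs; right.
Qed.

Lemma dspan_Dset s : (forall y, List.In y s -> Dset y) -> subk (dspan s) Dset.
Proof. by move=> sD; apply: dspan_min => //; apply: Dset_submod. Qed.

Lemma dspan_fractional s : (forall y, List.In y s -> Dset y) -> (exists y, y != 0 /\ dspan s y) ->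
  fractional (dspan s).
Proof. by move=> sD nz; apply: (ideal_integral (conj (dspan_submod s) (dspan_Dset sD)) nz).1. Qed.

Lemma dspan_sub_isum s (A B : kset) : (forall y, List.In y s -> isum A B y) ->
  exists sa sb, [/\ forall a, List.In a sa -> A a, forall b, List.In b sb -> B b &
    forall y, List.In y s -> isum (dspan sa) (dspan sb) y].
Proof.
elim: s => [|y s IH] sAB; first by exists [::], [::].
have [sa [sb [saA sbB ss]]] := IH (fun z sz => sAB z (or_intror sz)).
have [a [b [Aa [Bb ->]]]] := sAB y (or_introl erefl).
exists (a :: sa), (b :: sb); split.
- by move=> a' [<-|/saA].
- by move=> b' [<-|/sbB].
- move=> z [<-|/ss [u [v [su [sv ->]]]]].
    by exists a, b; split; [|split] => //; apply: dspan_mem; left.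
  exists u, v; split; first by apply/dspan_cons; exists 0, u; rewrite emb0 mul0r add0r.
  by split => //; apply/dspan_cons; exists 0, v; rewrite emb0 mul0r add0r.
Qed.

Lemma chain_mem_all (C : kset -> Prop) (s : seq K) : (exists A, C A) -> chain C ->
  (forall g, List.In g s -> chain_union C g) -> exists A, C A /\ forall g, List.In g s -> A g.
Proof.
move=> [A0 CA0] ch; elim: s => [|a s IH] sC; first by exists A0.
have [A [CA As]] := IH (fun g sg => sC g (or_intror sg)).
have [B [CB Ba]] := sC a (or_introl erefl).
case: (ch A B CA CB) => AB.
  by exists B; split => // g [<-|sg] //; apply/AB/As.
by exists A; split => // g [<-|sg]; [apply: AB | apply: As].
Qed.

Lemma chain_union_ideal (C : kset -> Prop) : (forall A, C A -> ideal A) -> (exists A, C A) ->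
  chain C -> ideal (chain_union C).
Proof.
move=> Ci [A0 CA0] ch; split; [split; [|split] |].
- by exists A0; split => //; apply: submod0; case: (Ci _ CA0).
- move=> x y [A [CA Ax]] [B [CB By]]; case: (ch A B CA CB) => AB.
    by exists B; split => //; apply: submodD; [case: (Ci _ CB) | apply: AB |].
  by exists A; split => //; apply: submodD; [case: (Ci _ CA) | | apply: AB].
- by move=> d x [A [CA Ax]]; exists A; split => //; apply: submodZ => //; case: (Ci _ CA).
- by move=> x [A [CA Ax]]; case: (Ci _ CA) => _; apply.
Qed.

Definition prime_ideal (P : kset) :=
  ideal P /\ ~ P 1 /\ forall a b : D, P (emb (a * b)) -> P (emb a) \/ P (emb b).

Lemma nz_prime_prime (P : kset) : nz_prime P -> prime_ideal P.
Proof.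
by move=> [/integral_ideal iP [pP mP]]; split => //; split => //; apply/(ideal_properP iP).
Qed.

Lemma nz_prime_nonunit (N : kset) : nz_prime N ->
  exists x : D, [/\ x != 0, x \isn't a GRing.unit & N (emb x)].
Proof.
move=> nzN; have [y [y0 Ny]] := nzN.1.1.2.1; have [x ex] := nzN.1.2 y Ny; subst y.
exists x; split => //; first by apply: contra_neq y0 => ->; rewrite emb0.
apply/negP => xu; apply nzN.2.1; apply: ideal_eq_Dset (integral_ideal nzN.1) _.
by rewrite -emb1 -(mulrV xu); apply: ideal_emb_mulr (integral_ideal nzN.1) Ny.
Qed.

Section PrimeIdeal.
Variable P : kset.
Hypothesis pP : prime_ideal P.

Lemma prime_mul_notin (a b : D) : ~ P (emb a) -> ~ P (emb b) -> ~ P (emb (a * b)).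
Proof. by case: pP => _ [_ mP] Pa Pb /mP[]. Qed.

Lemma prime_prod_notin (T : Type) (r : seq T) (Q : pred T) (F : T -> D) :
  (forall i, Q i -> ~ P (emb (F i))) -> ~ P (emb (\prod_(i <- r | Q i) F i)).
Proof.
move=> QF; apply: (big_ind (fun z => ~ P (emb z))) => //; last exact: prime_mul_notin.
by rewrite emb1; case: pP => _ [].
Qed.

Lemma prime_iprod_sub (l : list kset) : (forall I, List.In I l -> subk I Dset) ->
  subk (iprod l) P -> exists I, List.In I l /\ subk I P.
Proof.
case: pP => iP [P1 mP]; elim: l => [|I l IH] lD /= lP; first by case: P1; apply: lP; apply: Dset1.
case: (classic (subk I P)) => IP; first by exists I; split => //; left.
have lD' J : List.In J l -> subk J Dset by move=> lJ; apply: lD; right.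
case: (classic (subk (iprod l) P)) => [/(IH lD')[J [lJ JP]] | nlP].
  by exists J; split => //; right.
have [a [Ia Pa]] := not_subset IP; have [b [lb Pb]] := not_subset nlP.
have [a' ea] := lD I (or_introl erefl) a Ia.
have [b' eb] := iprod_Dset lD' lb.
exfalso; have := lP _ (imul_mem Ia lb); rewrite ea eb -embM => /mP[].
  by rewrite -ea.
by rewrite -eb.
Qed.

End PrimeIdeal.

Lemma prime_avoidance (I : kset) n (N : 'I_n -> kset) : ideal I ->
  (forall i, prime_ideal (N i)) -> (forall i, ~ subk I (N i)) ->
  exists a, I (emb a) /\ forall i, ~ N i (emb a).
Proof.
move=> iI; elim: n N => [|n IH] N Np IN.
  by exists 0; split=> [|[]//]; rewrite emb0; exact: submod0 iI.1.
have avoid_but i : exists a, I (emb a) /\ forall j, j != i -> ~ N j (emb a).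
  have [a [Ia Na]] := IH (N \o lift i) (fun j => Np _) (fun j => IN _).
  exists a; split => // j; case: (unliftP i j) => [k -> _|->]; [exact: Na | by rewrite eqxx].
have [a aP] := fin_all_exists avoid_but.
apply: NNPP => none.
have aN i : N i (emb (a i)).
  apply: NNPP => Nai; apply: none; exists (a i); split; first by case: (aP i).
  by move=> j; case: (eqVneq j i) => [-> // | ji]; apply: (aP i).2.
(* Each [a i] lies in [N i] only, so [a 0 + y * a 1 * ... * a n], with [y] in [I]
   outside [N 0], lies in none of them. *)
have [y [Iy N0y]] := not_subset (IN ord0).
have [y' ey] := iI.2 y Iy; subst y.
pose b := y' * \prod_(j < n) a (lift ord0 j).
have Ib : I (emb b) by rewrite /b embM; apply: ideal_mulr => //; apply: Dset_emb.
have N0b : ~ N ord0 (emb b).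
  rewrite /b; apply: (prime_mul_notin (Np ord0) N0y).
  by apply: (prime_prod_notin (Np ord0)) => j _; apply: (aP _).2; apply: neq_lift.
have Nb j : j != ord0 -> N j (emb b).
  case: (unliftP ord0 j) => [k -> _|->]; last by rewrite eqxx.
  rewrite /b (bigD1 k) //= mulrCA; apply: ideal_emb_mulr; [exact: (Np _).1 | exact: aN].
apply: none; exists (a ord0 + b); split.
  by rewrite embD; apply: submodD; [case: iI | case: (aP ord0) | ].
move=> j; rewrite embD => N_ab; have sN := (Np j).1.1.
case: (eqVneq j ord0) => [ej | j0].
  by subst j; apply: N0b; have := submodB sN N_ab (aN ord0); rewrite addrAC subrr add0r.
by apply: ((aP ord0).2 j j0); have := submodB sN N_ab (Nb j j0); rewrite addrK.
Qed.

Lemma prime_ideal_avoiding (S : D -> Prop) (I : kset) :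
  S 1 -> (forall s t, S s -> S t -> S (s * t)) -> ideal I -> (forall s, S s -> ~ I (emb s)) ->
  exists P, prime_ideal P /\ subk I P /\ forall s, S s -> ~ P (emb s).
Proof.
move=> S1 SM iI IS.
pose F A := ideal A /\ subk I A /\ forall s, S s -> ~ A (emb s).
have [P [[iP [IP PS]] Pmax]] : exists P, F P /\ forall B, F B -> subk P B -> B = P.
  apply: (Zorn_chain_union (A0 := I)); first by split => //; split => // x.
  move=> C CF neC ch.
  split; first by apply: chain_union_ideal => // A /CF[].
  split; first by case: neC => A CA x Ix; exists A; split => //; exact: ((CF A CA).2.1 x Ix).
  by move=> s Ss [A [CA As]]; apply: ((CF A CA).2.2 s Ss).
(* [P + eD] properly contains [P], hence meets [S]. *)
have meets e : ~ P (emb e) -> exists s p d, [/\ S s, P p & emb s = p + emb e * emb d].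
  move=> Pe; pose B := isum P (principal (emb e)).
  have PB : subk P B by move=> y Py; apply: isuml => //; exact: (principal_ideal e).1.
  apply: NNPP => nex; apply: Pe; rewrite -(Pmax B) //; first exact: isumr iP.1 (principal_mem e).
  split; first by apply: isum_ideal => //; apply: principal_ideal.
  split=> [y /IP/PB // | s Ss [p [z [Pp [[d ->] es]]]]].
  by apply: nex; exists s, p, d.
exists P; split; last by split.
split => //; split; first by rewrite -emb1; apply: PS.
move=> a b Pab; apply: NNPP => /not_or_and [Pa Pb].
have [s1 [p1 [d1 [Ss1 Pp1 e1]]]] := meets a Pa.
have [s2 [p2 [d2 [Ss2 Pp2 e2]]]] := meets b Pb.
apply: (PS _ (SM _ _ Ss1 Ss2)).
rewrite embM e2 mulrDr; apply: (submodD iP.1).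
  by rewrite mulrC; apply: ideal_mulr => //; apply: Dset_emb.
rewrite e1 mulrDl; apply: (submodD iP.1).
  by apply: ideal_mulr => //; apply: DsetM; apply: Dset_emb.
have -> : emb a * emb d1 * (emb b * emb d2) = emb (a * b) * emb (d1 * d2) by rewrite !embM mulrACA.
by apply: ideal_mulr => //; apply: Dset_emb.
Qed.

(** * Star operations *)

Section StarOperation.
Variable star : kset -> kset.
Hypothesis hstar : star_operation star.

Lemma star_fractional I : fractional I -> fractional (star I).
Proof. by case: hstar => sF _; apply: sF. Qed.
Lemma star_principal (x : K) : x != 0 -> star (principal x) = principal x.
Proof. by case: hstar => _ [sP _]; apply: sP. Qed.
Lemma star_smul (x : K) I : x != 0 -> fractional I -> star (smul x I) = smul x (star I).
Proof. by case: hstar => _ [_ [sS _]]; apply: sS. Qed.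
Lemma sub_star I : fractional I -> subk I (star I).
Proof. by case: hstar => _ [_ [_ [sE _]]]; apply: sE. Qed.
Lemma star_mono I J : fractional I -> fractional J -> subk I J -> subk (star I) (star J).
Proof. by case: hstar => _ [_ [_ [_ [sM _]]]]; apply: sM. Qed.
Lemma star_idem I : fractional I -> star (star I) = star I.
Proof. by case: hstar => _ [_ [_ [_ [_ sI]]]]; apply: sI. Qed.

Lemma star_Dset : star Dset = Dset.
Proof. by rewrite Dset_principal1 star_principal // oner_neq0. Qed.

Lemma star_sub_Dset I : fractional I -> subk I Dset -> subk (star I) Dset.
Proof. by move=> fI ID; rewrite -star_Dset; apply: star_mono => //; apply: Dset_fractional. Qed.

Lemma int_star_ideal_ideal I : int_star_ideal star I -> ideal I.
Proof. by move=> [[[sI _] _] ID]. Qed.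
Lemma int_star_ideal_fractional I : int_star_ideal star I -> fractional I.
Proof. by move=> [[fI _] _]. Qed.

Lemma star_int_star_ideal I : fractional I -> subk I Dset -> int_star_ideal star (star I).
Proof.
by move=> fI ID; split; [split; [apply: star_fractional | apply: star_idem] | apply: star_sub_Dset].
Qed.

Lemma principal_int_star_ideal (b : D) : b != 0 -> int_star_ideal star (principal (emb b)).
Proof.
move=> b0; split; last exact: (principal_ideal b).2.
by split; [apply: principal_fractional | apply: star_principal; apply: emb_neq0].
Qed.

Lemma star_min I P : int_star_ideal star P -> fractional I -> subk I P -> subk (star I) P.
Proof. by move=> [[fP eP] _] fI IP; rewrite -eP; apply: star_mono. Qed.

Lemma star_eq_Dset_ideal I : fractional I -> subk I Dset -> star I 1 -> star I = Dset.
Proof.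
move=> fI ID S1; apply: (ideal_eq_Dset _ S1).
exact: int_star_ideal_ideal (star_int_star_ideal fI ID).
Qed.

Section MaxStarIdeal.
Variable M : kset.
Hypothesis hM : max_star_ideal star M.

Lemma max_star_ideal_ideal : ideal M.
Proof. exact: int_star_ideal_ideal hM.1. Qed.
Lemma max_star_ideal_fractional : fractional M.
Proof. exact: int_star_ideal_fractional hM.1. Qed.
Lemma max_star_ideal_not1 : ~ M 1.
Proof. exact: (ideal_properP max_star_ideal_ideal).1 hM.2.1. Qed.

Lemma max_star_ideal_eq N : max_star_ideal star N -> subk M N -> N = M.
Proof. by case: hM => _ [_ Mmax] [hN [pN _]]; apply: Mmax. Qed.

Lemma max_star_ideal_extend (a : D) : ~ M (emb a) -> star (isum M (principal (emb a))) = Dset.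
Proof.
move=> Ma; have iM := max_star_ideal_ideal.
have a0 := ideal_notin_neq0 iM Ma.
pose X := isum M (principal (emb a)).
have fX : fractional X.
  by apply: isum_fractional; [apply: max_star_ideal_fractional | apply: principal_fractional].
have XD : subk X Dset by apply: (isum_ideal iM (principal_ideal a)).2.
apply: NNPP => pX; apply: Ma.
have MX : subk M (star X).
  by move=> y My; apply: sub_star => //; apply: isuml (principal_ideal a).1 My.
case: hM => _ [_ Mmax]; rewrite -(Mmax (star X)) //; last exact: star_int_star_ideal.
exact: sub_star fX _ (isumr iM.1 (principal_mem a)).
Qed.

Lemma max_star_ideal_prime : prime_ideal M.
Proof.
have iM := max_star_ideal_ideal.
split => //; split; first exact: max_star_ideal_not1.
move=> a b Mab; apply: NNPP => /not_or_and [Ma Mb].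
pose X := isum M (principal (emb a)).
have fX : fractional X.
  apply: isum_fractional; first exact: max_star_ideal_fractional.
  exact/principal_fractional/(ideal_notin_neq0 iM Ma).
have b0 := emb_neq0 (ideal_notin_neq0 iM Mb).
have fbX : fractional (smul (emb b) X).
  apply: smul_fractional fX => //.
  by exists 1; split; [apply: oner_neq0 | rewrite emb1 mul1r; apply: Dset_emb].
have bXM : subk (smul (emb b) X) M.
  move=> _ [z [[m [_ [Mm [[d ->] ->]]]] ->]]; rewrite mulrDr; apply: (submodD iM.1).
    by rewrite mulrC; apply: ideal_mulr => //; apply: Dset_emb.
  by rewrite mulrA -embM [b * a]mulrC; apply: ideal_mulr => //; apply: Dset_emb.
have := star_min hM.1 fbX bXM.
rewrite (star_smul b0 fX) /X (max_star_ideal_extend Ma) => bDM.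
by apply: Mb; apply: bDM; exists 1; split; [apply: Dset1 | rewrite mulr1].
Qed.

End MaxStarIdeal.

Lemma star_imul_l A B : fractional A -> fractional B -> star (imul (star A) B) = star (imul A B).
Proof.
move=> fA fB; have fSA := star_fractional fA.
have fAB := imul_fractional fA fB; have fSAB := imul_fractional fSA fB.
apply: subk_antisym; last by apply: star_mono => //; apply: imul_mono => //; apply: sub_star.
rewrite -[X in subk _ X](star_idem fAB); apply: star_mono => //; first exact: star_fractional.
apply: imul_min; first exact: (star_fractional fAB).1.
move=> a b Sa Bb; case: (eqVneq b 0) => [->|b0].
  by rewrite mulr0; apply: submod0 (star_fractional fAB).1.
have fbA : fractional (smul b A).
  by apply: smul_fractional => //; case: fB => _ [_ [e [e0 BD]]]; exists e; split => //; apply: BD.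
have : subk (star (smul b A)) (star (imul A B)).
  by apply: star_mono => // _ [z [Az ->]]; rewrite mulrC; apply: imul_mem.
by rewrite star_smul //; apply; exists a; split => //; rewrite mulrC.
Qed.

Lemma star_imul_r A B : fractional A -> fractional B -> star (imul A (star B)) = star (imul A B).
Proof. by move=> fA fB; rewrite imulC star_imul_l // imulC. Qed.

Lemma star_iprod_map (l : list kset) : (forall I, List.In I l -> fractional I) ->
  star (iprod (List.map star l)) = star (iprod l).
Proof.
elim: l => [|B l IH] lf //=.
have fB : fractional B by apply: lf; left.
have lf' I : List.In I l -> fractional I by move=> lI; apply: lf; right.
have fl' : fractional (iprod (List.map star l)).
  by apply: iprod_fractional => I /List.in_map_iff [J [<- lJ]]; apply/star_fractional/lf'.
have fl := iprod_fractional lf'.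
by rewrite star_imul_l // -(star_imul_r fB fl') IH // star_imul_r.
Qed.

Definition max_star_independent := forall P Q,
  max_star_ideal star P -> max_star_ideal star Q -> P <> Q ->
  forall N, nz_prime N -> ~ subk N (fun x => P x /\ Q x).

Section FiniteCharacter.
Hypothesis hfin : finite_character star.

Lemma chain_union_star (C : kset -> Prop) : (forall A, C A -> int_star_ideal star A) ->
  (exists A, C A) -> chain C -> fractional (chain_union C) -> star (chain_union C) = chain_union C.
Proof.
move=> Cs neC ch fU; apply: pred_ext => y; split; last exact: sub_star.
rewrite (hfin fU) => -[J [fJ [[s eJ] [JU Jy]]]].
have [A [CA As]] : exists A, C A /\ forall g, List.In g s -> A g.
  by apply: chain_mem_all => // g sg; apply: JU; rewrite eJ; apply: dspan_mem.
have JA : subk J A by rewrite eJ; apply: dspan_min => //; case: (int_star_ideal_ideal (Cs _ CA)).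
by exists A; split => //; apply: (star_min (Cs _ CA) fJ JA).
Qed.

Lemma exists_max_star_ideal I : int_star_ideal star I -> Defs.proper I ->
  exists M, max_star_ideal star M /\ subk I M.
Proof.
move=> hI pI; have iI := int_star_ideal_ideal hI.
pose F A := int_star_ideal star A /\ subk I A /\ ~ A 1.
have [M [[hM [IM M1]] Mmax]] : exists M, F M /\ forall B, F B -> subk M B -> B = M.
  apply: (Zorn_chain_union (A0 := I)).
    by split => //; split=> [x //|]; exact: (ideal_properP iI).1 pI.
  move=> C CF neC ch.
  have iU : ideal (chain_union C).
    by apply: chain_union_ideal => // A /CF[/int_star_ideal_ideal].
  have IU : subk I (chain_union C).
    by case: neC => A CA x Ix; exists A; split => //; exact: ((CF A CA).2.1 x Ix).
  have fU : fractional (chain_union C).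
    apply: (ideal_integral iU _).1; case: (int_star_ideal_fractional hI) => _ [[x [x0 Ix]] _].
    by exists x; split => //; apply: IU.
  have sU : star (chain_union C) = chain_union C.
    by apply: chain_union_star => // A /CF[].
  split; first by split; [split | exact: iU.2].
  by split => // -[A [CA A1]]; apply: ((CF A CA).2.2 A1).
exists M; split => //; split => //.
split; first exact: ((ideal_properP (int_star_ideal_ideal hM)).2 M1).
move=> J hJ pJ MJ; apply: Mmax => //; split => //; split=> [x /IM/MJ //|].
exact: ((ideal_properP (int_star_ideal_ideal hJ)).1 pJ).
Qed.

Lemma star_eq_Dset I : fractional I -> subk I Dset ->
  (forall M, max_star_ideal star M -> ~ subk I M) -> star I = Dset.
Proof.
move=> fI ID nIM; apply: NNPP => pI.
have [M [hM sM]] := exists_max_star_ideal (star_int_star_ideal fI ID) pI.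
by apply: (nIM M hM) => x Ix; apply/sM/sub_star.
Qed.

Lemma finite_type_between (g h : seq K) M : fractional (dspan g) -> max_star_ideal star M ->
  subk (star (dspan g)) M -> (forall y, List.In y h -> M y) ->
  let J := star (dspan (g ++ h)) in
  [/\ int_star_ideal star J, finite_type star J, Defs.proper J,
      subk (star (dspan g)) J & subk (dspan h) J].
Proof.
move=> fg hM gM hM' J.
have iM := max_star_ideal_ideal hM.
have ghM y : List.In y (g ++ h) -> M y.
  by rewrite List.in_app_iff => -[gy|/hM'//]; apply/gM/sub_star/dspan_mem.
have ghD : subk (dspan (g ++ h)) Dset by apply: dspan_Dset => y /ghM; apply: iM.2.
have sg_gh : subk (dspan g) (dspan (g ++ h)).
  by apply: dspan_min; [apply: dspan_submod | move=> y gy; apply/dspan_mem/List.in_or_app; left].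
have fgh : fractional (dspan (g ++ h)).
  apply: dspan_fractional => [y /ghM|]; first exact: iM.2.
  by case: fg => _ [[y [y0 gy]] _]; exists y; split => //; apply: sg_gh.
have iJ : int_star_ideal star J by apply: star_int_star_ideal.
split => //.
- by split; [exact: iJ.1 | exists (dspan (g ++ h)); do 2?split => //; exists (g ++ h)].
- apply: (ideal_properP (int_star_ideal_ideal iJ)).2 => J1; apply: (max_star_ideal_not1 hM).
  by apply: star_min hM.1 fgh _ _ J1; apply: dspan_min iM.1 _.
- exact: star_mono.
- apply: dspan_min; first exact: (int_star_ideal_ideal iJ).1.
  by move=> y hy; apply: (sub_star fgh); apply: dspan_mem; apply: List.in_or_app; right.
Qed.

Lemma star_homog_max_unique I P Q : star_homog star I ->
  max_star_ideal star P -> max_star_ideal star Q -> subk I P -> subk I Q -> P = Q.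
Proof.
move=> [_ [[_ [G [fG [[g eG] eI]]]] [_ Ihom]]] hP hQ IP IQ; subst G I.
apply: NNPP => PQ.
have [p0 [Pp Qp]] := not_subset (fun PQs => PQ (esym (max_star_ideal_eq hP hQ PQs))).
have [p ep] := (max_star_ideal_ideal hP).2 _ Pp; subst p0.
pose X := isum Q (principal (emb p)).
have fX : fractional X.
  apply: isum_fractional; first exact: max_star_ideal_fractional hQ.
  exact/principal_fractional/(ideal_notin_neq0 (max_star_ideal_ideal hQ) Qp).
have [F [fF [[s eF] [FX F1]]]] : exists F, fractional F /\ fin_gen F /\ subk F X /\ star F 1.
  have : Dset 1 by apply: Dset1.
  by rewrite -(max_star_ideal_extend hQ Qp) (hfin fX).
have sX y : List.In y s -> X y by move=> sy; apply: FX; rewrite eF; apply: dspan_mem.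
have [sq [sp [sqQ spp sXs]]] := dspan_sub_isum sX.
have spP y : List.In y sp -> P y.
  by move/spp; apply: principal_sub (max_star_ideal_ideal hP) Pp _.
have [iJ tJ pJ gJ spJ] := finite_type_between fG hP IP spP.
have [iL tL pL gL sqL] := finite_type_between fG hQ IQ sqQ.
set J := star (dspan (g ++ sp)) in iJ tJ pJ gJ spJ.
set L := star (dspan (g ++ sq)) in iL tL pL gL sqL.
apply: (Ihom _ _ iL tL pL gL iJ tJ pJ gJ).
have fLJ := isum_fractional (int_star_ideal_fractional iL) (int_star_ideal_fractional iJ).
have iLJ := isum_ideal (int_star_ideal_ideal iL) (int_star_ideal_ideal iJ).
have FLJ : subk F (isum L J).
  rewrite eF; apply: dspan_min iLJ.1 _ => y /sXs [u [v [su [sv ->]]]].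
  by exists u, v; split; [apply: sqL | split; [apply: spJ |]].
apply: (star_eq_Dset_ideal fLJ iLJ.2).
by apply: (star_mono fF fLJ FLJ).
Qed.

(** * Star-SH domains *)

Lemma star_homog_fractional I : star_homog star I -> fractional I.
Proof. by case=> [[[fI _] _] _]. Qed.
Lemma star_homog_Dset I : star_homog star I -> subk I Dset.
Proof. by case=> [[_ ID] _]. Qed.

Lemma star_homog_sub_max I : star_homog star I -> exists M, max_star_ideal star M /\ subk I M.
Proof. by case=> hI [_ [pI _]]; apply: exists_max_star_ideal. Qed.

Lemma star_homog_prime_sub x l : (forall I, List.In I l -> star_homog star I) ->
  principal (emb x) = star (iprod l) ->
  forall P, prime_ideal P -> P (emb x) -> exists I, List.In I l /\ subk I P.
Proof.
move=> lh ex P pP Px; apply: (prime_iprod_sub pP) => [I /lh/star_homog_Dset // | y ly].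
apply: (principal_sub pP.1 Px); rewrite ex; apply: sub_star ly.
by apply: iprod_fractional => I /lh/star_homog_fractional.
Qed.

Lemma star_SH_finite_star_character : star_SH star -> finite_star_character star.
Proof.
move=> SH x x0 xnu; have [l [lh ex]] := SH x x0 xnu.
have [ml mlP] : exists ml : list kset, forall I, List.In I l ->
    forall P, max_star_ideal star P -> subk I P -> List.In P ml.
  elim: (l) lh => [|I l' IH] lh; first by exists nil.
  have [ml mlP] := IH (fun J lJ => lh J (or_intror lJ)).
  have hI := lh I (or_introl erefl); have [M [hM IM]] := star_homog_sub_max hI.
  exists (M :: ml) => J [<-|lJ] P hP JP; last by right; apply: mlP lJ P hP JP.
  by left; apply: star_homog_max_unique hI hM hP IM JP.
exists ml => P hP Px.
have [I [lI IP]] := star_homog_prime_sub lh ex (max_star_ideal_prime hP) Px.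
exact: mlP lI P hP IP.
Qed.

Lemma star_SH_max_star_independent : star_SH star -> max_star_independent.
Proof.
move=> SH P Q hP hQ PQ N nzN NPQ.
have [x [x0 xnu Nx]] := nz_prime_nonunit nzN.
have [l [lh ex]] := SH x x0 xnu.
have [I [lI IN]] := star_homog_prime_sub lh ex (nz_prime_prime nzN) Nx.
by apply PQ; apply: (star_homog_max_unique (lh I lI) hP hQ) => z /IN/NPQ [].
Qed.

Section IndependentToSH.
Hypothesis hind : max_star_independent.
Variables (x : D) (n : nat) (M : 'I_n -> kset).
Hypothesis x0 : x != 0.
Hypothesis M_inj : injective M.
Hypothesis hM : forall i, max_star_ideal star (M i).
Hypothesis Mx : forall P, max_star_ideal star P -> P (emb x) <-> exists i, M i = P.
Variable i0 : 'I_n.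

Lemma max_star_ideal_separating :
  exists m : 'I_n -> D, forall i, M i (emb (m i)) /\ forall j, j != i -> ~ M j (emb (m i)).
Proof.
suff sep i : exists a, M i (emb a) /\ forall j, j != i -> ~ M j (emb a).
  exact: fin_all_exists sep.
have nsub k : ~ subk (M i) (M (lift i k)).
  by move=> /(max_star_ideal_eq (hM i) (hM _))/M_inj/eqP; rewrite eq_sym (negbTE (neq_lift i k)).
have [a [Ma Na]] := prime_avoidance (N := M \o lift i) (max_star_ideal_ideal (hM i))
  (fun k => max_star_ideal_prime (hM _)) nsub.
by exists a; split => // j; case: (unliftP i j) => [k -> _|->]; [exact: Na | rewrite eqxx].
Qed.

Lemma exists_multiplier : exists c : 'I_n -> D,
  (forall i j, j != i -> ~ M j (emb (c i))) /\ exists d, \prod_(i < n) c i = x * d.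
Proof.
pose S s := exists c : 'I_n -> D,
  (forall i j, j != i -> ~ M j (emb (c i))) /\ s = \prod_(i < n) c i.
apply: NNPP => none.
have S1 : S 1.
  exists (fun _ => 1); split=> [i j _|]; last by rewrite big1.
  by rewrite emb1; apply: max_star_ideal_not1.
have SM s t : S s -> S t -> S (s * t).
  move=> [c1 [g1 ->]] [c2 [g2 ->]]; exists (fun i => c1 i * c2 i); split; last by rewrite big_split.
  move=> i j ji; exact (prime_mul_notin (max_star_ideal_prime (hM j)) (g1 i j ji) (g2 i j ji)).
have [P [pP [xP PS]]] : exists P, prime_ideal P /\ subk (principal (emb x)) P /\
    forall s, S s -> ~ P (emb s).
  apply: prime_ideal_avoiding S1 SM (principal_ideal x) _ => s [c [gc ->]] [d].
  by rewrite -embM => /emb_inj cd; apply: none; exists c; split => //; exists d.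
have nzP : nz_prime P.
  split.
    apply: ideal_integral pP.1 _; exists (emb x).
    by split; [apply: emb_neq0 | apply: xP (principal_mem x)].
  by split; [exact: ((ideal_properP pP.1).2 pP.2.1) | apply: pP.2.2].
have in_other i : exists2 j, j != i & subk P (M j).
  apply: NNPP => no.
  have nsub k : ~ subk P (M (lift i k)).
    by move=> PM; apply no; exists (lift i k) => //; rewrite eq_sym neq_lift.
  have [a [Pa Na]] := prime_avoidance (N := M \o lift i) pP.1
    (fun k => max_star_ideal_prime (hM _)) nsub.
  have Sa : S a.
    exists (fun j => if j == i then a else 1); cbv beta.
    split; last by rewrite -big_mkcond big_pred1_eq.
    move=> i' j ji'; case: ifP => [/eqP ei | _]; last by rewrite emb1; apply: max_star_ideal_not1.
    by subst i'; case: (unliftP i j) ji' => [k -> _|->]; [exact: Na | rewrite eqxx].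
  exact (PS a Sa Pa).
have [j1 _ P1] := in_other i0; have [j2 j21 P2] := in_other j1.
have M12 : M j1 <> M j2 by move/M_inj=> e12; move: j21; rewrite e12 eqxx.
have PM12 : subk P (fun y => M j1 y /\ M j2 y) by move=> y Py; split; [apply: P1 | apply: P2].
exact: hind _ _ (hM j1) (hM j2) M12 _ nzP PM12.
Qed.

Lemma exists_separating_multiplier : exists c : 'I_n -> D,
  [/\ forall i, M i (emb (c i)), forall i j, j != i -> ~ M j (emb (c i))
    & exists d, \prod_(i < n) c i = x * d].
Proof.
have [m mP] := max_star_ideal_separating.
have [c [c_sep [d cd]]] := exists_multiplier.
exists (fun i => c i * m i); split.
- move=> i; exact (ideal_emb_mull (c i) (max_star_ideal_ideal (hM i)) (mP i).1).
- move=> i j ji.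
  exact (prime_mul_notin (max_star_ideal_prime (hM j)) (c_sep i j ji) ((mP i).2 j ji)).
- by exists (d * \prod_(i < n) m i); rewrite big_split /= cd mulrA.
Qed.

Section Factorization.
Variable c : 'I_n -> D.
Hypothesis c_in : forall i, M i (emb (c i)).
Hypothesis c_sep : forall i j, j != i -> ~ M j (emb (c i)).
Hypothesis c_prod : exists d, \prod_(i < n) c i = x * d.

Local Notation span_xc i := (dspan [:: emb x; emb (c i)]).

Lemma span_xc_Dset i : subk (span_xc i) Dset.
Proof. by apply: dspan_Dset => y [<-|[<-|[]]]; apply: Dset_emb. Qed.

Lemma span_xc_fractional i : fractional (span_xc i).
Proof.
apply: dspan_fractional => [y [<-|[<-|[]]] | ]; try exact: Dset_emb.
by exists (emb x); split; [apply: emb_neq0 | apply: dspan_mem; left].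
Qed.

Lemma span_xc_x i : span_xc i (emb x). Proof. by apply: dspan_mem; left. Qed.
Lemma span_xc_c i : span_xc i (emb (c i)). Proof. by apply: dspan_mem; right; left. Qed.

Lemma star_span_xc_sub_max i : subk (star (span_xc i)) (M i).
Proof.
apply: star_min (hM i).1 (span_xc_fractional i) _.
apply: dspan_min (max_star_ideal_ideal (hM i)).1 _ => y [<-|[<-|[]]]; last exact: c_in.
by apply/(Mx (hM i)); exists i.
Qed.

Lemma star_span_xc_max_unique i J : int_star_ideal star J -> Defs.proper J ->
  subk (star (span_xc i)) J -> subk J (M i).
Proof.
move=> iJ pJ BJ; have [P [hP JP]] := exists_max_star_ideal iJ pJ.
have BP y : span_xc i y -> P y.
  by move=> By; exact (JP _ (BJ _ (sub_star (span_xc_fractional i) By))).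
have [k ek] := (Mx hP).1 (BP _ (span_xc_x i)); subst P.
case: (eqVneq k i) => [-> // | ki] in JP BP *.
by exfalso; apply (c_sep ki); apply: BP; apply: span_xc_c.
Qed.

Lemma star_homog_star_span_xc i : star_homog star (star (span_xc i)).
Proof.
have iA := star_int_star_ideal (span_xc_fractional i) (@span_xc_Dset i).
split => //; split.
  split; first exact: iA.1.
  exists (span_xc i); split; first exact: span_xc_fractional.
  by split => //; exists [:: emb x; emb (c i)].
split.
  apply: (ideal_properP (int_star_ideal_ideal iA)).2 => A1.
  exact: max_star_ideal_not1 (hM i) (star_span_xc_sub_max A1).
move=> J L iJ _ pJ AJ iL _ pL AL JL.
have fJL := isum_fractional (int_star_ideal_fractional iJ) (int_star_ideal_fractional iL).
have JLM : subk (star (isum J L)) (M i).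
  apply: star_min (hM i).1 fJL _ => _ [a [b [Ja [Lb ->]]]].
  apply: (submodD (max_star_ideal_ideal (hM i)).1).
    exact (star_span_xc_max_unique iJ pJ AJ Ja).
  exact (star_span_xc_max_unique iL pL AL Lb).
by apply: max_star_ideal_not1 (hM i) _; apply: JLM; rewrite JL; apply: Dset1.
Qed.

Lemma iprod_span_xc_sub (L : seq 'I_n) : subk (iprod (List.map (fun i => span_xc i) L))
  (isum (principal (emb x)) (principal (emb (\prod_(i <- L) c i)))).
Proof.
elim: L => [|i L IH] /=.
  move=> _ [e ->]; apply: isumr (principal_ideal x).1 _.
  by exists e; rewrite big_nil emb1 mul1r.
apply: imul_min; first exact: isum_submod (principal_ideal _).1 (principal_ideal _).1.
move=> a b /dspan_cons [f1 [z [/dspan_cons [f2 [z' [/dspan_nil -> ->]]] ->]]].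
move=> /IH [u [v [[d1 ->] [[e1 ->] ->]]]].
exists (emb x * emb (f1 * (x * d1 + (\prod_(j <- L) c j) * e1) + f2 * c i * d1)).
exists (emb (c i * \prod_(j <- L) c j) * emb (f2 * e1)).
rewrite big_cons; split; [by eexists | split; [by eexists |]].
rewrite addr0 !embD !embM; ring.
Qed.

Lemma iprod_span_xc_mem (L : seq 'I_n) (f : 'I_n -> D) : (forall i, span_xc i (emb (f i))) ->
  iprod (List.map (fun i => span_xc i) L) (emb (\prod_(i <- L) f i)).
Proof.
move=> fB; elim: L => [|i L IH] /=; first by rewrite big_nil; apply: Dset_emb.
by rewrite big_cons embM; apply: imul_mem.
Qed.

Lemma iprod_span_xc_sub_principal : subk (iprod (List.map (fun i => span_xc i) (index_enum 'I_n)))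
  (principal (emb x)).
Proof.
move=> y /iprod_span_xc_sub [u [v [[d1 ->] [[e1 ->] ->]]]].
have [d cd] := c_prod; rewrite cd.
by exists (d1 + d * e1); rewrite embD !embM; ring.
Qed.

(* [x^-1 Pi] lies in no maximal star-ideal: it would contain [x], hence equal some
   [M k], and it contains the product of the [c i] with [i != k]. *)
Lemma star_iprod_span_xc :
  principal (emb x) = star (iprod (List.map (fun i => span_xc i) (index_enum 'I_n))).
Proof.
set Pi := iprod _.
have fPi : fractional Pi.
  by apply: iprod_fractional => _ /List.in_map_iff [i [<- _]]; apply: span_xc_fractional.
have ex0 := emb_neq0 x0.
pose Q := smul (emb x)^-1 Pi.
have fQ : fractional Q.
  apply: smul_fractional fPi; first by rewrite invr_eq0.
  by exists x; split => //; rewrite mulfV //; apply: Dset1.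
have QD : subk Q Dset.
  by move=> _ [w [/iprod_span_xc_sub_principal [d ->] ->]]; rewrite mulKf //; apply: Dset_emb.
have Q_mem k (g : 'I_n -> D) :
    (forall i, span_xc i (emb (g i))) -> Q (emb (\prod_(i < n | i != k) g i)).
  move=> gB; exists (emb (x * \prod_(i < n | i != k) g i)); split; last by rewrite embM mulKf.
  rewrite -prod_split_at; apply: iprod_span_xc_mem => i.
  by case: (i == k); [apply: span_xc_x | apply: gB].
have sQ : star Q = Dset.
  apply: star_eq_Dset fQ QD _ => P hP QP; have pP := max_star_ideal_prime hP.
  have Px : P (emb x).
    apply: NNPP => Px.
    have := QP _ (Q_mem i0 _ span_xc_x).
    exact (prime_prod_notin pP (Q := fun i => i != i0) (fun i _ => Px)).
  have [k ek] := (Mx hP).1 Px; subst P.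
  have ck i : i != k -> ~ M k (emb (c i)) by move=> ik; apply: c_sep; rewrite eq_sym.
  exact (prime_prod_notin pP (Q := fun i => i != k) ck (QP _ (Q_mem k _ span_xc_c))).
have xQ : smul (emb x) Q = Pi.
  apply: pred_ext => y; split=> [[_ [[w [Pw ->]] ->]] | Py]; first by rewrite mulVKf.
  by exists ((emb x)^-1 * y); split; [exists y | rewrite mulVKf].
by rewrite -xQ star_smul // sQ principal_smul.
Qed.

Lemma star_homog_factorization_of : exists l : list kset,
  (forall I, List.In I l -> star_homog star I) /\ principal (emb x) = star (iprod l).
Proof.
exists (List.map (fun i => star (span_xc i)) (index_enum 'I_n)); split.
  by move=> _ /List.in_map_iff [i [<- _]]; apply: star_homog_star_span_xc.
have -> : List.map (fun i => star (span_xc i)) (index_enum 'I_n) =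
          List.map star (List.map (fun i => span_xc i) (index_enum 'I_n)) by rewrite List.map_map.
rewrite star_iprod_map; first exact: star_iprod_span_xc.
by move=> _ /List.in_map_iff [i [<- _]]; apply: span_xc_fractional.
Qed.

End Factorization.

Lemma star_homog_factorization : exists l : list kset,
  (forall I, List.In I l -> star_homog star I) /\ principal (emb x) = star (iprod l).
Proof.
have [c [c_in c_sep c_prod]] := exists_separating_multiplier.
exact: star_homog_factorization_of c_in c_sep c_prod.
Qed.

End IndependentToSH.

Lemma max_star_independent_SH :
  finite_star_character star -> max_star_independent -> star_SH star.
Proof.
move=> fsc hind x x0 xnu; have [l lP] := fsc x x0 xnu.
have [n [M [M_inj MP]]] := finite_enum (P := fun P => max_star_ideal star P /\ P (emb x))
  (fun P '(conj hP Px) => lP P hP Px).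
have hM i : max_star_ideal star (M i) by have [] := (MP (M i)).2 (ex_intro _ i erefl).
have Mx P : max_star_ideal star P -> P (emb x) <-> exists i, M i = P.
  move=> hP; split=> [Px | ex]; first exact: ((MP P).1 (conj hP Px)).
  by case: ((MP P).2 ex).
have [P [hP xP]] := exists_max_star_ideal (principal_int_star_ideal x0) (principal_proper xnu).
have [i0 _] := (Mx P hP).1 (xP _ (principal_mem x)).
exact (star_homog_factorization hind x0 M_inj hM Mx i0).
Qed.

End FiniteCharacter.
End StarOperation.
End StarSH.

Theorem theoremM (D : idomainType) (star : kset D -> kset D)
  (hstar : star_operation star) (hfin : finite_character star) :
  star_SH star <->
  (finite_star_character star /\
   forall P Q, max_star_ideal star P -> max_star_ideal star Q -> P <> Q ->
     forall N, nz_prime N -> ~ subk N (fun x => P x /\ Q x)).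
Proof.
split=> [SH | [fsc hind]].
  split; first exact: star_SH_finite_star_character hstar hfin SH.
  exact (star_SH_max_star_independent hstar hfin SH).
exact: max_star_independent_SH hstar hfin fsc hind.
Qed.
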